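(* Let $Q\in\mathbb{R}^{n\times n}$ be symmetric positive definite, $\|x\|=\sqrt{x^TQx}$, $\|u\|_*=\sqrt{u^TQ^{-1}u}$. Let $f\colon\mathbb{R}^n\to\mathbb{R}$ be convex and differentiable with $\|\nabla f(x)-\nabla f(y)\|_*\le L\|x-y\|$ for all $x,y$, and assume $f$ has a minimizer $x_\star$, $f_\star=f(x_\star)$. Let $w\colon\mathbb{R}^n\to\mathbb{R}$ be differentiable and $1$-strongly convex with respect to $\|\cdot\|$, and $V_x(y)=w(y)-\langle\nabla w(x),y-x\rangle-w(x)$. Let $\{\alpha_k\}_{k=1}^\infty$ be positive with $\alpha_1=\frac2L$ and $0\le\alpha_{k+1}^2L-2\alpha_{k+1}\le\alpha_k^2L$ for $k=1,2,\dots$, and let $\tau_k=\frac{2}{\alpha_{k+1}L}$ for $k=1,2,\dots$. Given $x_0$, let $z_0=x_0$ and for $k=0,1,\dots$ \[ y_{k+1}=x_k-L^{-1}Q^{-1}\nabla f(x_k),\quad z_{k+1}=\operatorname*{argmin}_{y\in\mathbb{R}^n}\{V_{z_k}(y)+\langle\alpha_{k+1}\nabla f(x_k),y-x_k\rangle\},\quad x_{k+1}=(1-\tau_{k+1})y_{k+1}+\tau_{k+1}z_{k+1}. \] Then for $k=1,2,\dots$, \[ f(y_k)-f_\star\le\frac{2V_{x_0}(x_\star)}{L\alpha_k^2}. \]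
   Context: $\langle\cdot,\cdot\rangle$ is the standard Euclidean inner product. ''$1$-strongly convex with respect to $\|\cdot\|$'' means $w(y)\ge w(x)+\langle\nabla w(x),y-x\rangle+\frac12\|y-x\|^2$ for all $x,y$. *)

From HB Require Import structures.
From mathcomp Require Import all_boot all_order all_algebra.
From mathcomp Require Import all_classical all_reals all_analysis.
Set Implicit Arguments. Unset Strict Implicit. Unset Printing Implicit Defensive.
Import Order.TTheory GRing.Theory Num.Theory.
Import numFieldNormedType.Exports.
Local Open Scope ring_scope.

Definition inner (R : realType) (n : nat) (u v : 'cV[R]_n) : R :=
  (u^T *m v) ord0 ord0.

Definition qform (R : realType) (n : nat) (Q : 'M[R]_n) (x : 'cV[R]_n) : R :=
  (x^T *m Q *m x) ord0 ord0.

Definition spd (R : realType) (n : nat) (Q : 'M[R]_n) : Prop :=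
  Q^T = Q /\ (forall x : 'cV[R]_n, x != 0 -> 0 < qform Q x).

Definition Qnorm (R : realType) (n : nat) (Q : 'M[R]_n) (x : 'cV[R]_n) : R :=
  Num.sqrt (qform Q x).

Definition Qdnorm (R : realType) (n : nat) (Q : 'M[R]_n) (u : 'cV[R]_n) : R :=
  Num.sqrt (qform (invmx Q) u).

Definition is_gradient (R : realType) (n : nat) (f : 'cV[R]_n -> R)
    (g : 'cV[R]_n -> 'cV[R]_n) : Prop :=
  (forall x, differentiable f x) /\ (forall x h, 'd f x h = inner (g x) h).

Definition convex_fun (R : realType) (n : nat) (f : 'cV[R]_n -> R) : Prop :=
  forall (x y : 'cV[R]_n) (t : R), 0 <= t <= 1 ->
    f (t *: x + (1 - t) *: y) <= t * f x + (1 - t) * f y.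

Definition strongly_convex1 (R : realType) (n : nat) (Q : 'M[R]_n)
    (w : 'cV[R]_n -> R) (gw : 'cV[R]_n -> 'cV[R]_n) : Prop :=
  forall x y, w x + inner (gw x) (y - x) + 2^-1 * (Qnorm Q (y - x)) ^+ 2 <= w y.

Definition bregman (R : realType) (n : nat) (w : 'cV[R]_n -> R)
    (gw : 'cV[R]_n -> 'cV[R]_n) (x y : 'cV[R]_n) : R :=
  w y - inner (gw x) (y - x) - w x.

From HB Require Import structures.
From mathcomp Require Import all_boot all_order all_algebra.
From mathcomp Require Import all_classical all_reals all_analysis.
From mathcomp Require Import lra ring.
Import Order.TTheory GRing.Theory Num.Theory.
Import numFieldNormedType.Exports.
Set Implicit Arguments.
Unset Strict Implicit.
Unset Printing Implicit Defensive.
Local Open Scope ring_scope.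

(* Nesterov's method as a linear coupling of gradient descent (the y-steps)
   and mirror descent (the z-steps).  With A_k = L alpha_k^2 / 2 and
     d(a) = f a - f_star - ||grad f a||_*^2 / (2 L),
   which bounds f (a - L^-1 Q^-1 grad f a) - f_star from above, the potential
   A_{k+1} d(x_k) + V_{z_{k+1}}(x_star) does not increase.  Indeed, write
   A_{k+2} = B + alpha_{k+2} with 0 <= B <= A_{k+1} (this is the hypothesis on
   alpha): x_{k+1} is the B : alpha_{k+2} barycentre of y_{k+1} and z_{k+1},
   and the loss alpha_{k+2}^2 ||grad f x_{k+1}||_*^2 / 2 of the mirror step is
   paid for by the gradient-step term of A_{k+2} d(x_{k+1}).  Since
   alpha_1 = 2 / L gives A_1 = alpha_1, the potential starts below
   V_{x_0}(x_star), whence f y_{k+1} - f_star <= V_{x_0}(x_star) / A_{k+1}.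
   The descent lemma for the L-smooth f is proved without integration, by
   summing the first-order convexity inequality along a uniform subdivision
   of the segment and letting the mesh go to 0. *)

Section InnerProduct.
Variables (R : realType) (n : nat).
Implicit Types (u v w : 'cV[R]_n) (A : 'M[R]_n).

Lemma innerC u v : inner u v = inner v u.
Proof.
rewrite /inner -[in LHS](trmxK (u^T *m v)) [in LHS]mxE.
by rewrite trmx_mul trmxK.
Qed.

Lemma innerDr u v w : inner u (v + w) = inner u v + inner u w.
Proof. by rewrite /inner mulmxDr mxE. Qed.

Lemma innerDl u v w : inner (v + w) u = inner v u + inner w u.
Proof. by rewrite innerC innerDr !(innerC u). Qed.

Lemma innerZr u a v : inner u (a *: v) = a * inner u v.
Proof. by rewrite /inner -scalemxAr mxE. Qed.

Lemma innerZl u a v : inner (a *: v) u = a * inner v u.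
Proof. by rewrite innerC innerZr innerC. Qed.

Lemma innerNr u v : inner u (- v) = - inner u v.
Proof. by rewrite -scaleN1r innerZr mulN1r. Qed.

Lemma innerNl u v : inner (- v) u = - inner v u.
Proof. by rewrite -scaleN1r innerZl mulN1r. Qed.

Lemma innerBr u v w : inner u (v - w) = inner u v - inner u w.
Proof. by rewrite innerDr innerNr. Qed.

Lemma innerBl u v w : inner (v - w) u = inner v u - inner w u.
Proof. by rewrite innerDl innerNl. Qed.

Lemma inner0r u : inner u 0 = 0.
Proof. by rewrite /inner mulmx0 mxE. Qed.

Lemma inner0l u : inner 0 u = 0.
Proof. by rewrite innerC inner0r. Qed.

Lemma inner_mulmx u A v : inner u (A *m v) = inner (A^T *m u) v.
Proof. by rewrite /inner trmx_mul trmxK mulmxA. Qed.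

Lemma inner_self_eq0 u : inner u u = 0 -> u = 0.
Proof.
rewrite /inner mxE; under eq_bigr => k _ do rewrite mxE.
move=> /eqP; rewrite psumr_eq0 => [/allP u2_eq0|k _]; last first.
  by rewrite -expr2 sqr_ge0.
apply/matrixP => i j; rewrite (ord1 j) mxE.
by have /(_ (mem_index_enum _)) := u2_eq0 i; rewrite /= mulf_eq0 orbb => /eqP.
Qed.

Lemma qformE A v : qform A v = inner v (A *m v).
Proof. by rewrite /qform /inner mulmxA. Qed.

Lemma qformZ A a v : qform A (a *: v) = a ^+ 2 * qform A v.
Proof. by rewrite !qformE -scalemxAr innerZr innerZl mulrA expr2. Qed.

Lemma qformN A v : qform A (- v) = qform A v.
Proof. by rewrite -scaleN1r qformZ expr2 mulN1r opprK mul1r. Qed.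

Lemma qformB A u v : A^T = A ->
  qform A (u - v) = qform A u - 2 * inner u (A *m v) + qform A v.
Proof.
move=> A_sym; rewrite !qformE mulmxBr innerBl !innerBr.
rewrite (innerC v (A *m u)) inner_mulmx A_sym [inner u (A *m v)]inner_mulmx A_sym.
by rewrite mulr2n mulrDl mul1r; lra.
Qed.

End InnerProduct.

Section DirectionalDerivative.
Variables (R : realType) (V : normedModType R) (f : V -> R) (x d : V) (c : R).
Hypothesis f_diff : differentiable f x.

Lemma diff_le_of_quotient_le :
  (forall t : R, 0 < t < 1 -> (f (x + t *: d) - f x) / t <= c) -> 'd f x d <= c.
Proof.
move=> quotient_le; rewrite -deriveE //.
have /derivableP [] := diff_derivable (v := d) f_diff.
move=> /cvg_dnbhs_at_right cvg_quotient _.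
apply: (cvgr_to_le cvg_quotient); near=> t.
have t_gt0 : 0 < t by near: t; exact: nbhs_right_gt.
have t_lt1 : t < 1 by near: t; exact: nbhs_right_lt ltr01.
have := quotient_le t (andb_true_intro (conj t_gt0 t_lt1)).
by rewrite /= mulrC [t *: d + x]addrC.
Unshelve. all: by end_near.
Qed.

Lemma diff_ge_of_quotient_ge :
  (forall t : R, 0 < t < 1 -> c <= (f (x + t *: d) - f x) / t) -> c <= 'd f x d.
Proof.
move=> quotient_ge; rewrite -deriveE //.
have /derivableP [] := diff_derivable (v := d) f_diff.
move=> /cvg_dnbhs_at_right cvg_quotient _.
apply: (cvgr_to_ge cvg_quotient); near=> t.
have t_gt0 : 0 < t by near: t; exact: nbhs_right_gt.
have t_lt1 : t < 1 by near: t; exact: nbhs_right_lt ltr01.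
have := quotient_ge t (andb_true_intro (conj t_gt0 t_lt1)).
by rewrite /= mulrC [t *: d + x]addrC.
Unshelve. all: by end_near.
Qed.

End DirectionalDerivative.

Lemma le_of_le_add_div_succ (R : realType) (x y C : R) : 0 <= C ->
  (forall N : nat, x <= y + C / N.+1%:R) -> x <= y.
Proof.
move=> C_ge0 x_le; apply/ler_addgt0Pr => e e_gt0.
have [C_eq0|C_neq0] := eqVneq C 0.
  by have := x_le 0%N; rewrite C_eq0 mul0r addr0 => /le_trans->//; rewrite lerDl ltW.
have C_gt0 : 0 < C by rewrite lt_def C_neq0.
have [k ek] := ltr_add_invr (divr_gt0 e_gt0 C_gt0); rewrite add0r in ek.
apply: (le_trans (x_le k)); rewrite lerD2l.
have : C * k.+1%:R^-1 < C * (e / C) by rewrite ltr_pM2l.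
by rewrite [C * (e / C)]mulrC divfK ?gt_eqF // => /ltW.
Qed.

Section PositiveDefinite.
Variables (R : realType) (n : nat) (Q : 'M[R]_n).
Hypothesis Q_spd : spd Q.

Lemma spd_qform_ge0 v : 0 <= qform Q v.
Proof.
case: Q_spd => _ Q_pos; have [->|v_neq0] := eqVneq v 0.
  by rewrite qformE mulmx0 inner0r.
exact/ltW/Q_pos.
Qed.

Lemma spd_unitmx : Q \in unitmx.
Proof.
case: Q_spd => _ Q_pos; rewrite unitmxE unitfE; apply/negP => /det0P [r r_neq0 rQ].
have : 0 < qform Q r^T by apply: Q_pos; rewrite trmx_eq0.
by rewrite /qform trmxK rQ mul0mx mxE ltxx.
Qed.

Lemma spd_invmx_sym : (invmx Q)^T = invmx Q.
Proof. by case: Q_spd => Q_sym _; rewrite trmx_inv Q_sym. Qed.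

Lemma qform_invmx_mulmx g : qform Q (invmx Q *m g) = qform (invmx Q) g.
Proof.
by rewrite !qformE mulmxA mulmxV ?spd_unitmx // mul1mx inner_mulmx spd_invmx_sym.
Qed.

Lemma Qnorm_sqr v : Qnorm Q v ^+ 2 = qform Q v.
Proof. by rewrite /Qnorm sqr_sqrtr // spd_qform_ge0. Qed.

(* Expand 0 <= ||Q^-1 g - v||^2 in the Q-norm. *)
Lemma inner_young g v : 2 * inner g v <= qform (invmx Q) g + qform Q v.
Proof.
case: Q_spd => Q_sym _.
have := spd_qform_ge0 (invmx Q *m g - v).
rewrite qformB // qform_invmx_mulmx inner_mulmx Q_sym mulmxA mulmxV ?spd_unitmx //.
by rewrite mul1mx; lra.
Qed.

Lemma inner_le_of_dual_bound u v c : 0 < c ->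
  qform (invmx Q) u <= c ^+ 2 * qform Q v -> inner u v <= c * qform Q v.
Proof.
move=> c_gt0 u_le; have c_neq0 : c != 0 by rewrite gt_eqF.
have := inner_young (c^-1 *: u) v; rewrite qformZ innerZl.
have scaled_le : c^-1 ^+ 2 * qform (invmx Q) u <= qform Q v.
  by rewrite exprVn ler_pdivrMl ?exprn_gt0.
move=> young.
have -> : inner u v = c * (c^-1 * inner u v) by rewrite mulVKf.
by rewrite ler_pM2l //; lra.
Qed.

Lemma Qdnorm_lipschitz_qform (g : 'cV[R]_n -> 'cV[R]_n) L : 0 <= L ->
  (forall u v, Qdnorm Q (g u - g v) <= L * Qnorm Q (u - v)) ->
  forall u v, qform (invmx Q) (g u - g v) <= L ^+ 2 * qform Q (u - v).
Proof.
move=> L_ge0 g_lip u v; have := g_lip u v.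
rewrite /Qdnorm /Qnorm -[X in X * _]ger0_norm // -sqrtr_sqr -sqrtrM ?sqr_ge0 //.
by rewrite ler_sqrt // mulr_ge0 ?sqr_ge0 ?spd_qform_ge0.
Qed.

Section SmoothConvex.
Variables (f : 'cV[R]_n -> R) (g : 'cV[R]_n -> 'cV[R]_n) (L : R).
Hypothesis L_gt0 : 0 < L.
Hypothesis f_ge_linear : forall a b, f a + inner (g a) (b - a) <= f b.
Hypothesis g_lip :
  forall u v, qform (invmx Q) (g u - g v) <= L ^+ 2 * qform Q (u - v).

(* At the grid point p' = a + (j + 1) s d, convexity gives
   f p' <= f p + s <g p', d>, and the Lipschitz bound gives
   <g p' - g a, d> <= L (j + 1) s ||d||^2. *)
Lemma descent_on_grid a d s : 0 < s -> forall j : nat,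
  f (a + (j%:R * s) *: d) - f a <=
    j%:R * s * inner (g a) d + L * qform Q d * s ^+ 2 * (j%:R * (j%:R + 1) / 2).
Proof.
move=> s_gt0; elim=> [|j IH].
  by rewrite mul0r scale0r addr0 subrr !mul0r mulr0 addr0.
set p := a + (j%:R * s) *: d; set p' := a + (j.+1%:R * s) *: d.
have p'E : p' = p + s *: d by rewrite /p' /p -natr1 mulrDl mul1r scalerDl addrA.
have js_gt0 : 0 < j.+1%:R * s by rewrite mulr_gt0 // ltr0n.
have f_p'_le : f p' - s * inner (g p') d <= f p.
  by have := f_ge_linear p' p; rewrite p'E opprD addrA subrr add0r innerNr innerZr.
have g_p'_le : inner (g p' - g a) d <= L * (j.+1%:R * s) * qform Q d.
  apply: inner_le_of_dual_bound; rewrite ?mulr_gt0 //.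
  have p'Ba : p' - a = (j.+1%:R * s) *: d by rewrite /p' addrC addKr.
  by have := g_lip p' a; rewrite p'Ba qformZ mulrA -exprMn.
have := ler_wpM2l (ltW s_gt0) g_p'_le.
by move: IH f_p'_le; rewrite -/p innerBl -[j.+1%:R]natr1; lra.
Qed.

Lemma descent_lemma a b :
  f b <= f a + inner (g a) (b - a) + L / 2 * qform Q (b - a).
Proof.
set d := b - a; have D_ge0 := spd_qform_ge0 d.
suff : f b - f a <= inner (g a) d + L * qform Q d / 2 by lra.
apply: (@le_of_le_add_div_succ _ _ _ (L * qform Q d / 2)).
  by rewrite divr_ge0 // mulr_ge0 // ltW.
move=> N; set r : R := N.+1%:R; have r_gt0 : 0 < r by rewrite ltr0n.
have r_inv_gt0 : 0 < r^-1 by rewrite invr_gt0.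
have := descent_on_grid a d r_inv_gt0 N.+1.
have a_d : a + d = b by rewrite /d addrC subrK.
rewrite -/r mulfV ?gt_eqF // scale1r a_d mul1r.
have -> : L * qform Q d * r^-1 ^+ 2 * (r * (r + 1) / 2)
    = L * qform Q d / 2 + L * qform Q d / 2 / r.
  by field; rewrite gt_eqF.
by rewrite addrA.
Qed.

Lemma gradient_step_le a :
  f (a - L^-1 *: (invmx Q *m g a)) <= f a - qform (invmx Q) (g a) / (2 * L).
Proof.
have := descent_lemma a (a - L^-1 *: (invmx Q *m g a)).
have -> : a - L^-1 *: (invmx Q *m g a) - a = - (L^-1 *: (invmx Q *m g a)).
  by rewrite addrC addKr.
rewrite qformN qformZ qform_invmx_mulmx // innerNr innerZr -qformE.
have -> : L / 2 * (L^-1 ^+ 2 * qform (invmx Q) (g a))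
    = qform (invmx Q) (g a) / (2 * L) by field; rewrite gt_eqF.
have -> : L^-1 * qform (invmx Q) (g a)
    = 2 * (qform (invmx Q) (g a) / (2 * L)) by field; rewrite gt_eqF.
lra.
Qed.

End SmoothConvex.

(* Apply gradient_step_le to f - <g b, .>, whose gradient vanishes at b. *)
Lemma convex_smooth_lower_bound (f : 'cV[R]_n -> R) g L : 0 < L ->
  (forall a b, f a + inner (g a) (b - a) <= f b) ->
  (forall u v, qform (invmx Q) (g u - g v) <= L ^+ 2 * qform Q (u - v)) ->
  forall a b, f b + inner (g b) (a - b) + qform (invmx Q) (g a - g b) / (2 * L) <= f a.
Proof.
move=> L_gt0 f_ge_linear g_lip a b.
pose phi u := f u - inner (g b) u; pose gphi u := g u - g b.
have phi_ge_linear u v : phi u + inner (gphi u) (v - u) <= phi v.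
  by have := f_ge_linear u v; rewrite /phi /gphi innerBl !innerBr; lra.
have gphi_lip u v : qform (invmx Q) (gphi u - gphi v) <= L ^+ 2 * qform Q (u - v).
  by rewrite /gphi opprB addrA subrK; exact: g_lip.
have := le_trans (phi_ge_linear b (a - L^-1 *: (invmx Q *m gphi a)))
  (gradient_step_le L_gt0 phi_ge_linear gphi_lip a).
by rewrite /phi {1}/gphi subrr inner0l addr0 innerBr; lra.
Qed.

Lemma bregman_ge0 (w : 'cV[R]_n -> R) gw u v :
  strongly_convex1 Q w gw -> 0 <= bregman w gw u v.
Proof.
move=> w_sc; have := w_sc u v; rewrite Qnorm_sqr // /bregman.
have := spd_qform_ge0 (v - u); lra.
Qed.

End PositiveDefinite.

Section Gradient.
Variables (R : realType) (n : nat) (f : 'cV[R]_n -> R) (g : 'cV[R]_n -> 'cV[R]_n).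
Hypothesis f_grad : is_gradient f g.

Lemma convex_fun_ge_linear :
  convex_fun f -> forall a b, f a + inner (g a) (b - a) <= f b.
Proof.
case: f_grad => f_diff f_d f_cvx a b.
suff : 'd f a (b - a) <= f b - f a by rewrite f_d; lra.
apply: diff_le_of_quotient_le => // t /andP [t_gt0 t_lt1].
have -> : a + t *: (b - a) = t *: b + (1 - t) *: a.
  by rewrite scalerBr scalerBl scale1r addrCA.
rewrite ler_pdivrMr //.
by have := f_cvx b a t; rewrite (ltW t_gt0) (ltW t_lt1) => /(_ isT); lra.
Qed.

Lemma gradient_eq0_at_minimum xs : (forall u, f xs <= f u) -> g xs = 0.
Proof.
case: f_grad => f_diff f_d xs_min.
have g_xs_ge0 h : 0 <= inner (g xs) h.
  rewrite -f_d; apply: diff_ge_of_quotient_ge => // t /andP [t_gt0 _].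
  by rewrite divr_ge0 ?subr_ge0 // ltW.
apply: inner_self_eq0; apply/eqP; rewrite eq_le g_xs_ge0 andbT.
by have := g_xs_ge0 (- g xs); rewrite innerNr oppr_ge0.
Qed.

(* First-order optimality of [z'] reads [g z' = g z - c v]; plugging it into
   the three-point identity of Bregman divergences gives the equation. *)
Lemma bregman_argmin_three_point (z z' x v : 'cV[R]_n) (c : R) :
  (forall u, bregman f g z z' + inner (c *: v) (z' - x) <=
             bregman f g z u + inner (c *: v) (u - x)) ->
  forall u, bregman f g z u + inner (c *: v) (u - x)
            - bregman f g z z' - inner (c *: v) (z' - x) = bregman f g z' u.
Proof.
case: f_grad => f_diff f_d z'_argmin.
have g_z'_ge h : inner (g z) h - inner (c *: v) h <= inner (g z') h.
  rewrite -(f_d z'); apply: diff_ge_of_quotient_ge => // t /andP [t_gt0 _].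
  rewrite ler_pdivlMr //.
  have := z'_argmin (z' + t *: h); rewrite /bregman !innerBr !innerDr !innerZr.
  lra.
move=> u; have := g_z'_ge (u - z'); have := g_z'_ge (- (u - z')).
by rewrite /bregman !innerNr !innerBr; lra.
Qed.

End Gradient.

Section LinearCoupling.
Variables (R : realType) (n : nat) (Q : 'M[R]_n).
Variables (f : 'cV[R]_n -> R) (gf : 'cV[R]_n -> 'cV[R]_n) (L : R).
Variables (w : 'cV[R]_n -> R) (gw : 'cV[R]_n -> 'cV[R]_n) (xs : 'cV[R]_n).
Hypotheses (Q_spd : spd Q) (L_gt0 : 0 < L).
Hypothesis f_ge_linear : forall a b, f a + inner (gf a) (b - a) <= f b.
Hypothesis gf_lip :
  forall u v, qform (invmx Q) (gf u - gf v) <= L ^+ 2 * qform Q (u - v).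
Hypotheses (w_grad : is_gradient w gw) (w_sc : strongly_convex1 Q w gw).
Hypothesis gf_xs : gf xs = 0.

Definition descent_gap a := f a - f xs - qform (invmx Q) (gf a) / (2 * L).

Lemma gradient_step_gap a :
  f (a - L^-1 *: (invmx Q *m gf a)) - f xs <= descent_gap a.
Proof.
by have := gradient_step_le Q_spd L_gt0 f_ge_linear gf_lip a; rewrite /descent_gap; lra.
Qed.

Lemma descent_gap_ge0 a : 0 <= descent_gap a.
Proof.
have := gradient_step_gap a.
by have := f_ge_linear xs (a - L^-1 *: (invmx Q *m gf a)); rewrite gf_xs inner0l; lra.
Qed.

Lemma potential_step xk xp zk zk1 c B :
  0 < c -> 0 <= B -> L * c ^+ 2 / 2 = B + c ->
  (B + c) *: xk = B *: (xp - L^-1 *: (invmx Q *m gf xp)) + c *: zk ->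
  (forall u, bregman w gw zk zk1 + inner (c *: gf xk) (zk1 - xk) <=
             bregman w gw zk u + inner (c *: gf xk) (u - xk)) ->
  (B + c) * descent_gap xk + bregman w gw zk1 xs
    <= B * descent_gap xp + bregman w gw zk xs.
Proof.
move=> c_gt0 B_ge0 cB coupling zk1_argmin.
have Qinv_sym := spd_invmx_sym Q_spd.
have lb_xs := convex_smooth_lower_bound Q_spd L_gt0 f_ge_linear gf_lip xs xk.
rewrite gf_xs sub0r qformN in lb_xs.
have lb_xp := convex_smooth_lower_bound Q_spd L_gt0 f_ge_linear gf_lip xp xk.
rewrite qformB // in lb_xp.
have coupling_g := congr1 (inner (gf xk)) coupling.
rewrite innerDr !innerZr innerBr innerZr inner_mulmx Qinv_sym in coupling_g.
rewrite [inner (invmx Q *m gf xk) (gf xp)]innerC in coupling_g.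
have three_point := bregman_argmin_three_point w_grad zk1_argmin xs.
have zk1_sc := w_sc zk zk1; rewrite Qnorm_sqr // in zk1_sc.
have young := inner_young Q_spd (c *: gf xk) (zk - zk1).
rewrite qformZ -opprB qformN innerZl innerNr innerBr in young.
move: lb_xs lb_xp coupling_g three_point zk1_sc young.
rewrite /descent_gap /bregman !innerBr !innerZl.
set G := qform (invmx Q) (gf xk); set Gp := qform (invmx Q) (gf xp).
set C := inner (gf xp) (invmx Q *m gf xk).
have L_neq0 : L != 0 by rewrite gt_eqF.
have -> : G / (2 * L) = G / L / 2 by field.
have -> : Gp / (2 * L) = Gp / L / 2 by field.
have -> : (Gp - 2 * C + G) / (2 * L) = Gp / L / 2 - C / L + G / L / 2 by field.
have -> : L^-1 * C = C / L by rewrite mulrC.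
have -> : c ^+ 2 * G = 2 * (B + c) * (G / L) by rewrite -cB; field.
move=> lb_xs lb_xp coupling_g three_point zk1_sc young.
have := ler_wpM2l (ltW c_gt0) lb_xs; have := ler_wpM2l B_ge0 lb_xp.
lra.
Qed.

Section Algorithm.
Variables (alpha : nat -> R) (x y z : nat -> 'cV[R]_n).
Hypothesis alpha_gt0 : forall k, (1 <= k)%N -> 0 < alpha k.
Hypothesis alpha1 : alpha 1%N = 2 / L.
Hypothesis alpha_rec : forall k, (1 <= k)%N ->
  0 <= alpha k.+1 ^+ 2 * L - 2 * alpha k.+1 <= alpha k ^+ 2 * L.
Hypothesis z0 : z 0%N = x 0%N.
Hypothesis y_step : forall k, y k.+1 = x k - L^-1 *: (invmx Q *m gf (x k)).
Hypothesis z_step : forall k u,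
  bregman w gw (z k) (z k.+1) + inner (alpha k.+1 *: gf (x k)) (z k.+1 - x k)
  <= bregman w gw (z k) u + inner (alpha k.+1 *: gf (x k)) (u - x k).
Hypothesis x_step : forall k, let tau := 2 / (alpha k.+2 * L) in
  x k.+1 = (1 - tau) *: y k.+1 + tau *: z k.+1.

Definition weight k := L * alpha k ^+ 2 / 2.

Definition potential k := weight k.+1 * descent_gap (x k) + bregman w gw (z k.+1) xs.

Lemma potential0_le : potential 0 <= bregman w gw (x 0%N) xs.
Proof.
have alpha1_gt0 : 0 < alpha 1%N by exact: alpha_gt0.
have weight1 : weight 1 = alpha 1%N by rewrite /weight alpha1; field; rewrite gt_eqF.
have z_step0 := z_step 0; rewrite z0 in z_step0.
have := potential_step (B := 0) (xp := x 0%N) alpha1_gt0 (lexx 0) _ _ z_step0.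
rewrite /potential add0r mul0r add0r weight1.
by apply; rewrite ?scale0r ?add0r.
Qed.

Lemma potential_succ_le k : potential k.+1 <= potential k.
Proof.
have /andP [rec_ge0 rec_le] := alpha_rec (k := k.+1) isT.
have c_gt0 : 0 < alpha k.+2 by exact: alpha_gt0.
set B := weight k.+2 - alpha k.+2.
have B_ge0 : 0 <= B by rewrite /B /weight; lra.
have B_le : B <= weight k.+1 by rewrite /B /weight; lra.
have BcE : B + alpha k.+2 = weight k.+2 by rewrite subrK.
have tauE : weight k.+2 * (2 / (alpha k.+2 * L)) = alpha k.+2.
  by rewrite /weight; field; rewrite ?gt_eqF.
have coupling : (B + alpha k.+2) *: x k.+1 =
    B *: (x k - L^-1 *: (invmx Q *m gf (x k))) + alpha k.+2 *: z k.+1.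
  rewrite BcE; have := x_step k; rewrite /= => ->.
  by rewrite -y_step scalerDr !scalerA tauE mulrBr mulr1 tauE.
have cB : L * alpha k.+2 ^+ 2 / 2 = B + alpha k.+2 by rewrite BcE.
have := potential_step c_gt0 B_ge0 cB coupling (z_step k.+1).
rewrite BcE => step_le; rewrite /potential; apply: (le_trans step_le).
by rewrite lerD2r ler_wpM2r // descent_gap_ge0.
Qed.

Lemma potential_le k : potential k <= bregman w gw (x 0%N) xs.
Proof.
elim: k => [|k IH]; first exact: potential0_le.
exact: le_trans (potential_succ_le k) IH.
Qed.

Lemma accelerated_rate k :
  f (y k.+1) - f xs <= 2 * bregman w gw (x 0%N) xs / (L * alpha k.+1 ^+ 2).
Proof.
have alpha_k_gt0 : 0 < alpha k.+1 by exact: alpha_gt0.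
have weight_gt0 : 0 < weight k.+1 by rewrite /weight divr_gt0 ?mulr_gt0 ?exprn_gt0.
have -> : 2 * bregman w gw (x 0%N) xs / (L * alpha k.+1 ^+ 2)
    = bregman w gw (x 0%N) xs / weight k.+1.
  by rewrite /weight; field; rewrite ?gt_eqF ?mulf_neq0 ?expf_neq0 ?gt_eqF.
rewrite ler_pdivlMr // mulrC; apply: le_trans (potential_le k).
have := bregman_ge0 Q_spd (z k.+1) xs w_sc.
have := ler_wpM2l (ltW weight_gt0) (gradient_step_gap (x k)).
by rewrite /potential y_step; lra.
Qed.

End Algorithm.

End LinearCoupling.

Theorem theorem5 (R : realType) (n : nat) (Q : 'M[R]_n)
  (f : 'cV[R]_n -> R) (gf : 'cV[R]_n -> 'cV[R]_n) (L : R)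
  (w : 'cV[R]_n -> R) (gw : 'cV[R]_n -> 'cV[R]_n)
  (xstar : 'cV[R]_n) (alpha : nat -> R)
  (x y z : nat -> 'cV[R]_n) :
  spd Q ->
  convex_fun f -> is_gradient f gf ->
  0 < L ->
  (forall u v, Qdnorm Q (gf u - gf v) <= L * Qnorm Q (u - v)) ->
  (forall u, f xstar <= f u) ->
  is_gradient w gw -> strongly_convex1 Q w gw ->
  (forall k, (1 <= k)%N -> 0 < alpha k) ->
  alpha 1%N = 2 / L ->
  (forall k, (1 <= k)%N ->
     0 <= alpha k.+1 ^+ 2 * L - 2 * alpha k.+1 <= alpha k ^+ 2 * L) ->
  z 0%N = x 0%N ->
  (forall k, y k.+1 = x k - L^-1 *: (invmx Q *m gf (x k))) ->
  (forall k u, bregman w gw (z k) (z k.+1) + inner (alpha k.+1 *: gf (x k)) (z k.+1 - x k)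
             <= bregman w gw (z k) u + inner (alpha k.+1 *: gf (x k)) (u - x k)) ->
  (forall k, let tau := 2 / (alpha k.+2 * L) in
     x k.+1 = (1 - tau) *: y k.+1 + tau *: z k.+1) ->
  forall k, (1 <= k)%N ->
    f (y k) - f xstar <= 2 * bregman w gw (x 0%N) xstar / (L * alpha k ^+ 2).
Proof.
move=> Q_spd f_cvx f_grad L_gt0 gf_lip xstar_min w_grad w_sc alpha_gt0 alpha1
  alpha_rec z0 y_step z_step x_step [//|k] _.
have f_ge_linear := convex_fun_ge_linear f_grad f_cvx.
have gf_lip2 := Qdnorm_lipschitz_qform Q_spd (ltW L_gt0) gf_lip.
have gf_xstar := gradient_eq0_at_minimum f_grad xstar_min.
exact: (accelerated_rate Q_spd L_gt0 f_ge_linear gf_lip2 w_grad w_sc gf_xstar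
  alpha_gt0 alpha1 alpha_rec z0 y_step z_step x_step).
Qed.
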